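(* Let $m\ge3$ be odd and suppose $B,D\subseteq\mathbb{Z}_m$ are $2$-$\{m;k,r;k+r-\frac{m+1}{2}\}$ ASDS with $0\notin B$ and $m-1\notin D$. Then \[ \frac{(m-1)^2}{2}\le (k+r)m-(k^2+r^2)\le\frac{m^2-1}{2}. \]
   Context: For $B,D\subseteq\mathbb{Z}_m$ and $a\in\mathbb{Z}_m\setminus\{0\}$, let $N_{B,D}(a)=|\{(x,x')\in B\times B: x-x'\equiv a\}|+|\{(y,y')\in D\times D: y-y'\equiv a\}|$. For an integer $\mu$, $B$ and $D$ are $2$-$\{m;k,r;\mu\}$ ASDS if $|B|=k$, $|D|=r$ and $N_{B,D}(a)\in\{\mu,\mu+1\}$ for every $a\in\mathbb{Z}_m\setminus\{0\}$. *)

From HB Require Import structures.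
From mathcomp Require Import all_boot all_order all_algebra.
Set Implicit Arguments. Unset Strict Implicit. Unset Printing Implicit Defensive.
Import Order.TTheory GRing.Theory Num.Theory.

(* N_{B,D}(a): number of ordered pairs (x,x') in B x B with x - x' = a,
   plus the same count for D.  Here 'Z_m is Z/mZ (requires 1 < m). *)
Definition ndiff (m : nat) (B D : {set 'Z_m}) (a : 'Z_m) : nat :=
  #|[set p : 'Z_m * 'Z_m | [&& p.1 \in B, p.2 \in B & (p.1 - p.2)%R == a]]|
  + #|[set p : 'Z_m * 'Z_m | [&& p.1 \in D, p.2 \in D & (p.1 - p.2)%R == a]]|.

Definition ASDS2 (m k r : nat) (mu : int) (B D : {set 'Z_m}) : Prop :=
  #|B| = k /\ #|D| = r /\
  forall a : 'Z_m, a != 0%R ->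
    (Posz (ndiff B D a) = mu \/ Posz (ndiff B D a) = (mu + 1)%R).

(* Summing N_{B,D}(a) over all a <> 0 counts the ordered pairs of distinct
   elements of B and of D, so the sum is k^2 - k + r^2 - r.  Each of its m - 1
   terms is mu or mu + 1, which pins k^2 + r^2 - (k + r) between (m - 1) mu and
   (m - 1)(mu + 1); for mu = k + r - (m + 1)/2 these two inequalities are
   rearrangements of the claimed bounds. *)

From HB Require Import structures.
From mathcomp Require Import all_boot all_order all_algebra.
From mathcomp Require Import lra.
Import Order.TTheory GRing.Theory Num.Theory.

Set Implicit Arguments.
Unset Strict Implicit.

Local Open Scope ring_scope.

Section DifferencePairs.

Variable V : finZmodType.

Definition diff_pairs (B : {set V}) (a : V) : {set V * V} :=
  [set p : V * V | [&& p.1 \in B, p.2 \in B & p.1 - p.2 == a]].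

Lemma card_diff_pairs0 (B : {set V}) : #|diff_pairs B 0| = #|B|.
Proof.
have -> : diff_pairs B 0 = (fun x => (x, x)) @: B.
  apply/setP => -[x y]; rewrite !inE /= subr_eq0.
  apply/idP/imsetP => [/and3P[xB yB /eqP ->]|[z zB [-> ->]]]; first by exists y.
  by rewrite zB eqxx.
by rewrite card_imset // => x y [].
Qed.

Lemma sum_card_diff_pairs (B : {set V}) :
  (\sum_a #|diff_pairs B a| = #|B| * #|B|)%N.
Proof.
rewrite -cardsX -sum1_card (partition_big (fun p : V * V => p.1 - p.2) predT) //=.
apply: eq_bigr => a _; rewrite -sum1_card; apply: eq_bigl => -[x y].
by rewrite !inE andbA.
Qed.

Lemma sum_card_diff_pairs_neq0 (B : {set V}) :
  (\sum_(a | a != 0%R) #|diff_pairs B a| + #|B| = #|B| * #|B|)%N.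
Proof.
by rewrite -sum_card_diff_pairs [RHS](bigD1 0%R) //= card_diff_pairs0 addnC.
Qed.

End DifferencePairs.

Lemma sum_pinched (R : numDomainType) (I : finType) (P : pred I)
    (f : I -> R) (mu : R) :
  (forall i, P i -> f i = mu \/ f i = mu + 1) ->
  #|P|%:R * mu <= \sum_(i | P i) f i <= #|P|%:R * (mu + 1).
Proof.
move=> f_pinched; rewrite !mulr_natl -!sumr_const.
by apply/andP; split; apply: ler_sum => i /f_pinched [] ->; rewrite ?lerDl.
Qed.

Lemma ASDS2_card_bounds (m k r : nat) (mu : int) (B D : {set 'Z_m}) :
  (1 < m)%N -> ASDS2 k r mu B D ->
  (m%:R - 1) * mu%:~R <= (k%:R ^+ 2 + r%:R ^+ 2 - (k%:R + r%:R) : rat)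
    <= (m%:R - 1) * (mu%:~R + 1).
Proof.
move=> m_gt1 [cardB [cardD ndiff_pinched]].
have card_neq0 : #|[pred a : 'Z_m | a != 0]| = m.-1.
  by rewrite cardC1 card_ord Zp_cast.
have sum_ndiff :
    (\sum_(a | a != 0%R) ndiff B D a + (k + r) = k ^ 2 + r ^ 2)%N.
  by rewrite big_split /= addnACA -cardB -cardD !sum_card_diff_pairs_neq0.
have := sum_pinched (P := [pred a : 'Z_m | a != 0])
  (f := fun a => (ndiff B D a)%:R) (mu := mu%:~R : rat).
rewrite card_neq0 -subn1 natrB ?(ltnW m_gt1) //.
rewrite -!natrX -!natrD -sum_ndiff natrD addrK -natr_sum; apply=> a /ndiff_pinched.
by rewrite pmulrn => -[-> | ->]; [left | right; rewrite intrD].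
Qed.

Lemma natr_half_succ_odd (F : fieldType) (m : nat) :
  2 != 0 :> F -> odd m -> (m.+1 %/ 2)%:R = (m%:R + 1) / 2 :> F.
Proof.
move=> two_neq0 m_odd; apply: (canRL (mulfK two_neq0)).
by rewrite natr1 -natrM divnK // dvdn2 /= m_odd.
Qed.

Local Close Scope ring_scope.

Theorem corollary5 (m k r : nat) (B D : {set 'Z_m}) :
  3 <= m -> odd m ->
  ASDS2 k r (Posz (k + r) - Posz (m.+1 %/ 2))%R B D ->
  (0%R : 'Z_m) \notin B ->
  ((m.-1)%:R : 'Z_m)%R \notin D ->
  (((m%:Q - 1)%R ^+ 2 / 2 <= (k + r)%:Q * m%:Q - (k%:Q ^+ 2 + r%:Q ^+ 2))
   /\ ((k + r)%:Q * m%:Q - (k%:Q ^+ 2 + r%:Q ^+ 2) <= (m%:Q ^+ 2 - 1) / 2))%R.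
Proof.
move=> m_ge3 m_odd asds _ _.
have /andP[lo hi] := ASDS2_card_bounds (ltnW m_ge3) asds.
move: lo hi; rewrite intrB -!pmulrn natr_half_succ_odd // !natrD => lo hi.
by split; lra.
Qed.
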